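(* Let $0<q<1/2$, $p=1-q$, and for integers $z\ge1$ let $$P_{SN}(z)=1-\sum_{k=0}^{z-1}e^{-zq/p}\frac{(zq/p)^k}{k!}\left(1-\left(\frac qp\right)^{z-k}\right).$$ Then for every integer $z\ge1$, $$P_{SN}(z)<\frac{1}{1-\frac qp}\frac{1}{\sqrt{2\pi z}}e^{-\left(\frac qp-1-\log\frac qp\right)z}+\frac12e^{-\left(\frac qp-1-\log\frac qp\right)z}.$$
   Context: $P_{SN}(z)$ is Nakamoto's approximation of the probability of success of a double-spend attack after $z$ confirmations. *)

From Stdlib Require Import Reals Lra Lia Factorial.
Open Scope R_scope.

(* Nakamoto's approximation P_SN(z), with p = 1 - q, lambda = z q / p:
   P_SN(z) = 1 - sum_{k=0}^{z-1} e^{-lambda} lambda^k / k! (1 - (q/p)^{z-k}).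
   sum_f_R0 f n sums f 0 + ... + f n, so we use n = z - 1 (z >= 1). *)
Definition P_SN (q : R) (z : nat) : R :=
  let p := 1 - q in
  let lam := INR z * q / p in
  1 - sum_f_R0 (fun k => exp (- lam) * lam ^ k / INR (fact k)
                          * (1 - (q / p) ^ (z - k))) (z - 1).

From Stdlib Require Import Reals Lra Lia Factorial.
From Coquelicot Require Import Coquelicot.
Open Scope R_scope.

(** With [r = q/p], [lam = r z] and [E = exp (- c z) = r^z e^(z - lam)], the sum
    defining [P_SN(z)] splits into Poisson distribution functions:
    [P_SN(z) = P(Pois(lam) >= z) + E P(Pois(z) < z)].
    Comparing derivatives in [lam] bounds the first tail by
    [E (e^-z z^z / z!) / (1 - r)], and [e^-z z^z / z! <= 1 / sqrt (2 PI z)] is the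
    lower Stirling bound.  The second probability is at most [1/2]: the function
    [s |-> P(Pois(s) < z) + P(Pois(z^2/s) < z)] decreases on [(0, z]], because
    [x^z e^-x] is smaller at [z^2/s] than at [s], while it is at most
    [1 + P(Pois(z^2/s) < z)], which tends to [1] as [s -> 0].
    Stirling's bound is obtained without limits: [sigma n = (n! e^n)^2 / n^(2n+1)]
    satisfies [sigma n >= 1] and, by Wallis' inequality,
    [2 PI sigma (2n) <= (sigma n)^2]; so [sigma n < 2 PI] would force
    [sigma (2^k n) -> 0]. *)

Lemma derive_nonneg_le (f df : R -> R) (a b : R) : a <= b ->
  (forall x, a <= x <= b -> is_derive f x (df x)) ->
  (forall x, a < x < b -> 0 <= df x) -> f a <= f b.
Proof.
  intros Hab Hd Hpos. destruct (Req_dec a b) as [<- | Hne]; [lra |].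
  destruct (MVT_cor2 f df a b) as [c [Hc Hac]]; [lra | |].
  - intros c Hc. apply is_derive_Reals, Hd, Hc.
  - assert (0 <= df c) by (apply Hpos; lra). nra.
Qed.

Lemma derive_pos_lt (f df : R -> R) (a b : R) : a < b ->
  (forall x, a <= x <= b -> is_derive f x (df x)) ->
  (forall x, a < x < b -> 0 < df x) -> f a < f b.
Proof.
  intros Hab Hd Hpos.
  destruct (MVT_cor2 f df a b) as [c [Hc Hac]]; [lra | |].
  - intros c Hc. apply is_derive_Reals, Hd, Hc.
  - assert (0 < df c) by (apply Hpos; lra). nra.
Qed.

Lemma exp_le_compat (x y : R) : x <= y -> exp x <= exp y.
Proof. intros [Hlt | ->]; [left; apply exp_increasing, Hlt | right; reflexivity]. Qed.

Lemma exp_INR_mul (n : nat) (x : R) : exp (INR n * x) = exp x ^ n.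
Proof.
  induction n as [| n IH].
  - rewrite Rmult_0_l. apply exp_0.
  - rewrite S_INR, <- tech_pow_Rmult, <- IH, <- exp_plus. f_equal. ring.
Qed.

Lemma pow_exp_ln (x : R) (n : nat) : 0 < x -> x ^ n = exp (INR n * ln x).
Proof. intros Hx. rewrite <- ln_pow, exp_ln; auto using pow_lt. Qed.

Lemma pow_2n (x : R) (n : nat) : x ^ (2 * n) = (x ^ n) ^ 2.
Proof. rewrite Nat.mul_comm. apply pow_mult. Qed.

Lemma pow_2n_1 (x : R) (n : nat) : x ^ (2 * n + 1) = (x ^ n) ^ 2 * x.
Proof. rewrite pow_add, pow_2n. ring. Qed.

Lemma pow_div_fact_le_exp (x : R) (n : nat) : 0 <= x -> x ^ n / INR (fact n) <= exp x.
Proof.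
  intros Hx. eapply Rle_trans; [| apply (exp_ge_taylor x n Hx)].
  destruct n as [| n]; [simpl; lra |].
  rewrite tech5. enough (0 <= sum_f_R0 (fun k => x ^ k / INR (fact k)) n) by lra.
  apply cond_pos_sum. intros k.
  apply Rdiv_le_0_compat; [apply pow_le; lra | apply INR_fact_lt_0].
Qed.

Lemma Rle_0_of_forall_le_div (a c x0 : R) : 0 < x0 ->
  (forall x, x0 <= x -> a <= c / x) -> a <= 0.
Proof.
  intros Hx0 Hle. destruct (Rle_lt_dec a 0) as [Ha | Ha]; [exact Ha | exfalso].
  assert (Hc : 0 < c).
  { specialize (Hle x0 (Rle_refl x0)).
    apply (Rmult_le_compat_r x0) in Hle; [| lra].
    unfold Rdiv in Hle. rewrite Rmult_assoc, Rinv_l in Hle by lra. nra. }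
  assert (Hx : 0 < c / a) by (apply Rdiv_lt_0_compat; lra).
  specialize (Hle (x0 + c / a) ltac:(lra)).
  apply (Rmult_le_compat_r (x0 + c / a)) in Hle; [| lra].
  unfold Rdiv in Hle. rewrite Rmult_assoc, Rinv_l in Hle by lra.
  assert (a * (c * / a) = c) by (field; lra). nra.
Qed.

Lemma ln_1_plus_le (y : R) : 0 <= y -> ln (1 + y) <= y - y ^ 2 / 2 + y ^ 3 / 3.
Proof.
  intros Hy.
  assert (H : 0 - 0 ^ 2 / 2 + 0 ^ 3 / 3 - ln (1 + 0) <= y - y ^ 2 / 2 + y ^ 3 / 3 - ln (1 + y)).
  { apply (derive_nonneg_le (fun t => t - t ^ 2 / 2 + t ^ 3 / 3 - ln (1 + t))
      (fun t => t ^ 3 / (1 + t)) 0 y Hy).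
    - intros x Hx. auto_derive; [lra | field; lra].
    - intros x Hx. apply Rdiv_le_0_compat; [apply pow_le |]; lra. }
  rewrite Rplus_0_r, ln_1 in H. lra.
Qed.

Lemma mul_ln_1_plus_inv_le (x : R) : 1 <= x ->
  (2 * x + 1) * ln (1 + / x) <= 2 + / x - / (x + 1).
Proof.
  intros Hx.
  assert (Hinv : 0 < / x) by (apply Rinv_0_lt_compat; lra).
  apply Rle_trans with ((2 * x + 1) * (/ x - (/ x) ^ 2 / 2 + (/ x) ^ 3 / 3)).
  { apply Rmult_le_compat_l; [lra | apply ln_1_plus_le; lra]. }
  assert (Hgap : 2 + / x - / (x + 1) - (2 * x + 1) * (/ x - (/ x) ^ 2 / 2 + (/ x) ^ 3 / 3)
                 = (5 * x + 2) * (x - 1) / (6 * x ^ 3 * (x + 1))) by (field; lra).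
  assert (0 <= (5 * x + 2) * (x - 1) / (6 * x ^ 3 * (x + 1))).
  { apply Rdiv_le_0_compat; [nra |].
    apply Rmult_lt_0_compat; [apply Rmult_lt_0_compat; [lra | apply pow_lt] |]; lra. }
  lra.
Qed.

Lemma inv_sub_add_2ln_nonneg (y : R) : 0 < y <= 1 -> 0 <= / y - y + 2 * ln y.
Proof.
  intros Hy.
  assert (H : - (/ y - y + 2 * ln y) <= - (/ 1 - 1 + 2 * ln 1)).
  { apply (derive_nonneg_le (fun t => - (/ t - t + 2 * ln t)) (fun t => (1 - / t) ^ 2) y 1);
      [lra | | intros; apply pow2_ge_0].
    intros t Ht. auto_derive; [repeat split; lra | field; lra]. }
  rewrite ln_1, Rinv_1 in H. lra.
Qed.

(** * Poisson distribution functions *)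

Fixpoint expsum (n : nat) (x : R) : R :=
  match n with
  | O => 0
  | S m => expsum m x + x ^ m / INR (fact m)
  end.

Definition poisson_pmf (n : nat) (x : R) : R := exp (- x) * (x ^ n / INR (fact n)).

(** The probability that a Poisson variable of mean [x] is less than [n]. *)
Definition poisson_cdf (n : nat) (x : R) : R := exp (- x) * expsum n x.

Lemma expsum_S (m : nat) (x : R) : expsum (S m) x = expsum m x + x ^ m / INR (fact m).
Proof. reflexivity. Qed.

Lemma expsum_S_0 (m : nat) : expsum (S m) 0 = 1.
Proof.
  induction m as [| m IH]; [simpl; field |].
  rewrite expsum_S, IH, pow_i by lia. unfold Rdiv. ring.
Qed.

Lemma expsum_le (n : nat) (x : R) : 1 <= x -> expsum n x <= INR n * x ^ n.
Proof.
  intros Hx. induction n as [| n IH]; [simpl; lra |].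
  rewrite expsum_S, S_INR, <- tech_pow_Rmult.
  assert (Hpow : 0 <= x ^ n) by (apply pow_le; lra).
  assert (Hterm : x ^ n / INR (fact n) <= x ^ n).
  { unfold Rdiv. rewrite <- (Rmult_1_r (x ^ n)) at 2. apply Rmult_le_compat_l; [exact Hpow |].
    rewrite <- Rinv_1. apply Rinv_le_contravar; [lra |].
    apply (le_INR 1), lt_O_fact. }
  assert (Hgrow : (INR n + 1) * x ^ n <= (INR n + 1) * (x * x ^ n)).
  { apply Rmult_le_compat_l; [pose proof (pos_INR n); lra | nra]. }
  lra.
Qed.

Lemma is_derive_pow_div_fact (m : nat) (x : R) :
  is_derive (fun t => t ^ S m / INR (fact (S m))) x (x ^ m / INR (fact m)).
Proof.
  auto_derive; [auto |].
  change (fact m + m * fact m)%nat with (fact (S m)).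
  change (match m with 0%nat => 1 | S _ => INR m + 1 end) with (INR (S m)).
  rewrite fact_simpl, mult_INR. field.
  split; [apply INR_fact_neq_0 | apply not_0_INR; lia].
Qed.

Lemma is_derive_expsum (m : nat) (x : R) : is_derive (expsum (S m)) x (expsum m x).
Proof.
  induction m as [| m IH].
  - simpl. auto_derive; auto.
  - apply (is_derive_plus (expsum (S m)) _ x _ _ IH (is_derive_pow_div_fact m x)).
Qed.

Lemma poisson_pmf_pos (n : nat) (x : R) : 0 < x -> 0 < poisson_pmf n x.
Proof.
  intros Hx. apply Rmult_lt_0_compat; [apply exp_pos |].
  apply Rdiv_lt_0_compat; [apply pow_lt, Hx | apply INR_fact_lt_0].
Qed.

Lemma poisson_pmf_S (m : nat) (x : R) :
  poisson_pmf (S m) x = poisson_pmf m x * x / INR (S m).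
Proof.
  unfold poisson_pmf. rewrite fact_simpl, mult_INR. simpl pow. field.
  split; [apply INR_fact_neq_0 | apply not_0_INR; lia].
Qed.

Lemma is_derive_poisson_pmf (m : nat) (x : R) :
  is_derive (poisson_pmf (S m)) x (poisson_pmf m x - poisson_pmf (S m) x).
Proof.
  replace (poisson_pmf m x - poisson_pmf (S m) x) with
    (- exp (- x) * (x ^ S m / INR (fact (S m))) + exp (- x) * (x ^ m / INR (fact m))).
  - apply (is_derive_mult (fun t => exp (- t)) (fun t => t ^ S m / INR (fact (S m)))).
    + auto_derive; [auto | ring].
    + apply is_derive_pow_div_fact.
    + apply Rmult_comm.
  - unfold poisson_pmf. ring.
Qed.

Lemma is_derive_poisson_cdf (m : nat) (x : R) :
  is_derive (poisson_cdf (S m)) x (- poisson_pmf m x).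
Proof.
  replace (- poisson_pmf m x) with
    (- exp (- x) * expsum (S m) x + exp (- x) * expsum m x).
  - apply (is_derive_mult (fun t => exp (- t)) (expsum (S m))).
    + auto_derive; [auto | ring].
    + apply is_derive_expsum.
    + apply Rmult_comm.
  - unfold poisson_pmf. rewrite expsum_S. ring.
Qed.

Lemma poisson_cdf_S_0 (m : nat) : poisson_cdf (S m) 0 = 1.
Proof. unfold poisson_cdf. rewrite Ropp_0, exp_0, expsum_S_0. ring. Qed.

Lemma poisson_cdf_le_1 (n : nat) (x : R) : 0 <= x -> poisson_cdf n x <= 1.
Proof.
  intros Hx. destruct n as [| m]; [unfold poisson_cdf; simpl; lra |].
  rewrite <- (poisson_cdf_S_0 m).
  apply Ropp_le_cancel.
  apply (derive_nonneg_le (fun t => - poisson_cdf (S m) t) (poisson_pmf m) 0 x Hx).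
  - intros t _. rewrite <- (Ropp_involutive (poisson_pmf m t)).
    apply (is_derive_opp (poisson_cdf (S m))), is_derive_poisson_cdf.
  - intros t Ht. left. apply poisson_pmf_pos. lra.
Qed.

Lemma poisson_cdf_le_div (n : nat) (x : R) : 1 <= x ->
  poisson_cdf n x <= INR n * INR (fact (S n)) / x.
Proof.
  intros Hx. unfold poisson_cdf. rewrite exp_Ropp.
  assert (Hxn : 0 < x ^ S n) by (apply pow_lt; lra).
  pose proof (INR_fact_lt_0 (S n)).
  assert (Hinv : / exp x <= INR (fact (S n)) / x ^ S n).
  { rewrite <- Rinv_div. apply Rinv_le_contravar.
    - apply Rdiv_lt_0_compat; lra.
    - apply pow_div_fact_le_exp. lra. }
  apply Rle_trans with (/ exp x * (INR n * x ^ n)).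
  { apply Rmult_le_compat_l; [left; apply Rinv_0_lt_compat, exp_pos | apply expsum_le, Hx]. }
  apply Rle_trans with (INR (fact (S n)) / x ^ S n * (INR n * x ^ n)).
  { apply Rmult_le_compat_r; [| exact Hinv].
    apply Rmult_le_pos; [apply pos_INR | apply pow_le; lra]. }
  right. rewrite <- tech_pow_Rmult. field. split; [lra |]. apply pow_nonzero. lra.
Qed.

Lemma poisson_tail_lt (n : nat) (lam : R) : 0 < lam < INR n ->
  1 - poisson_cdf n lam < poisson_pmf n lam * (INR n / (INR n - lam)).
Proof.
  intros Hlam. destruct n as [| m]; [simpl in Hlam; lra |].
  set (N := INR (S m)) in *.
  set (f x := poisson_pmf (S m) x * (N / (N - x)) + poisson_cdf (S m) x).
  assert (Hf : f 0 < f lam).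
  { apply (derive_pos_lt f (fun x => poisson_pmf m x * x / (N - x) ^ 2)); [lra | |].
    - intros x Hx. unfold f.
      replace (poisson_pmf m x * x / (N - x) ^ 2) with
        ((poisson_pmf m x - poisson_pmf (S m) x) * (N / (N - x))
         + poisson_pmf (S m) x * (N / (N - x) ^ 2) + - poisson_pmf m x).
      + apply (is_derive_plus (fun t => poisson_pmf (S m) t * (N / (N - t))) (poisson_cdf (S m)));
          [| apply is_derive_poisson_cdf].
        apply (is_derive_mult (poisson_pmf (S m)) (fun t => N / (N - t)));
          [apply is_derive_poisson_pmf | | apply Rmult_comm].
        auto_derive; [lra | field; lra].
      + rewrite poisson_pmf_S. fold N. field. lra.
    - intros x Hx. pose proof (poisson_pmf_pos m x).
      apply Rdiv_lt_0_compat; [nra | apply pow_lt; lra]. }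
  unfold f in Hf. rewrite poisson_cdf_S_0, poisson_pmf_S, Rmult_0_r, Rdiv_0_l in Hf. lra.
Qed.

Lemma poisson_pmf_inversion_le (n : nat) (s : R) : 0 < s <= INR n ->
  poisson_pmf n (INR n ^ 2 / s) <= poisson_pmf n s.
Proof.
  intros Hs. set (N := INR n) in *. set (y := s / N).
  assert (HN : 0 < N) by lra.
  assert (Hy : 0 < y <= 1).
  { unfold y. split; [apply Rdiv_lt_0_compat; lra |].
    apply (Rmult_le_reg_r N); [lra |]. unfold Rdiv. rewrite Rmult_assoc, Rinv_l; lra. }
  assert (Hform : forall x, 0 < x -> poisson_pmf n x = exp (N * ln x - x) / INR (fact n)).
  { intros x Hx. unfold poisson_pmf. rewrite (pow_exp_ln x n Hx).
    unfold Rminus. rewrite Rplus_comm, exp_plus. fold N. unfold Rdiv. ring. }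
  assert (Hs' : s = N * y) by (unfold y; field; lra).
  assert (Hu : N ^ 2 / s = N * / y) by (rewrite Hs'; field; lra).
  rewrite Hu, Hs', !Hform by (apply Rmult_lt_0_compat; try apply Rinv_0_lt_compat; lra).
  apply Rmult_le_compat_r; [left; apply Rinv_0_lt_compat, INR_fact_lt_0 |].
  apply exp_le_compat.
  rewrite !ln_mult, ln_Rinv by (try apply Rinv_0_lt_compat; lra).
  pose proof (inv_sub_add_2ln_nonneg y Hy).
  assert (0 <= N * (/ y - y + 2 * ln y)) by (apply Rmult_le_pos; lra).
  nra.
Qed.

Lemma poisson_cdf_inversion_ge (m : nat) (s : R) : 0 < s <= INR (S m) ->
  2 * poisson_cdf (S m) (INR (S m))
  <= poisson_cdf (S m) s + poisson_cdf (S m) (INR (S m) ^ 2 / s).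
Proof.
  intros Hs. set (N := INR (S m)) in *.
  set (D t := poisson_cdf (S m) t + poisson_cdf (S m) (N ^ 2 / t)).
  assert (HD : - D s <= - D N).
  { apply (derive_nonneg_le (fun t => - D t)
      (fun t => N / t * (poisson_pmf (S m) t - poisson_pmf (S m) (N ^ 2 / t))) s N);
      [lra | |].
    - intros t Ht.
      replace (N / t * (poisson_pmf (S m) t - poisson_pmf (S m) (N ^ 2 / t))) with
        (- (- poisson_pmf m t + - (N ^ 2 / t ^ 2) * - poisson_pmf m (N ^ 2 / t))).
      + apply (is_derive_opp D).
        apply (is_derive_plus (poisson_cdf (S m)) (fun t => poisson_cdf (S m) (N ^ 2 / t)));
          [apply is_derive_poisson_cdf |].
        apply (is_derive_comp (poisson_cdf (S m)) (fun t => N ^ 2 / t));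
          [apply is_derive_poisson_cdf | auto_derive; [lra | field; lra]].
      + rewrite !poisson_pmf_S. fold N. field. lra.
    - intros t Ht. apply Rmult_le_pos; [apply Rdiv_le_0_compat; lra |].
      pose proof (poisson_pmf_inversion_le (S m) t ltac:(fold N; lra)) as Hle.
      fold N in Hle. lra. }
  unfold D in HD. replace (N ^ 2 / N) with N in HD by (field; lra). lra.
Qed.

Lemma poisson_cdf_mean_le_half (n : nat) : poisson_cdf n (INR n) <= 1 / 2.
Proof.
  destruct n as [| m]; [unfold poisson_cdf; simpl; lra |].
  set (N := INR (S m)).
  assert (HN : 1 <= N) by (apply (le_INR 1); lia).
  enough (2 * poisson_cdf (S m) N - 1 <= 0) by lra.
  apply (Rle_0_of_forall_le_div _ (N * INR (fact (S (S m)))) N); [lra |].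
  intros x Hx.
  assert (Hs : 0 < N ^ 2 / x <= N).
  { split; [apply Rdiv_lt_0_compat; nra |].
    apply (Rmult_le_reg_r x); [lra |]. unfold Rdiv. rewrite Rmult_assoc, Rinv_l; nra. }
  pose proof (poisson_cdf_inversion_ge m _ Hs) as Hinv. fold N in Hinv.
  replace (N ^ 2 / (N ^ 2 / x)) with x in Hinv by (field; split; lra).
  pose proof (poisson_cdf_le_1 (S m) (N ^ 2 / x) ltac:(lra)).
  pose proof (poisson_cdf_le_div (S m) x ltac:(lra)) as Htail.
  fold N in Htail. lra.
Qed.

(** * Wallis integrals *)

Lemma nat_ind2 (P : nat -> Prop) : P 0%nat -> P 1%nat ->
  (forall n, P n -> P (S (S n))) -> forall n, P n.
Proof.
  intros H0 H1 HS n. enough (P n /\ P (S n)) by tauto.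
  induction n as [| n [IH1 IH2]]; auto.
Qed.

(** The primitive of [sin ^ k] vanishing at [0], by the reduction formula. *)
Fixpoint sin_pow_prim (k : nat) (x : R) : R :=
  match k with
  | O => x
  | S O => 1 - cos x
  | S (S j) => (INR (S j) * sin_pow_prim j x - sin x ^ S j * cos x) / INR (S (S j))
  end.

Lemma sin_pow_prim_SS (j : nat) (x : R) : sin_pow_prim (S (S j)) x
  = (INR (S j) * sin_pow_prim j x - sin x ^ S j * cos x) / INR (S (S j)).
Proof. reflexivity. Qed.

Lemma is_derive_sin_pow_prim (k : nat) (x : R) : is_derive (sin_pow_prim k) x (sin x ^ k).
Proof.
  induction k as [| | j IH] using nat_ind2.
  - simpl. auto_derive; [auto | ring].
  - simpl. auto_derive; [auto | ring].
  - apply (is_derive_ext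
      (fun t => (INR (S j) * sin_pow_prim j t - sin t ^ S j * cos t) / INR (S (S j))));
      [reflexivity |].
    auto_derive; [exists (sin x ^ j); exact IH |].
    replace (Derive (fun t => sin_pow_prim j t) x) with (sin x ^ j)
      by (symmetry; apply is_derive_unique, IH).
    change (match j with 0%nat => 1 | S _ => INR j + 1 end) with (INR (S j)).
    pose proof (sin2_cos2 x) as Hpyth. unfold Rsqr in Hpyth.
    assert (HSj : INR (S j) + 1 <> 0) by (pose proof (pos_INR (S j)); lra).
    replace (1 * cos x * (INR (S j) * sin x ^ j) * cos x)
      with (INR (S j) * sin x ^ j * (cos x * cos x)) by ring.
    replace (cos x * cos x) with (1 - sin x * sin x) by lra.
    simpl pow. field. exact HSj.
Qed.

Lemma sin_pow_prim_0 (k : nat) : sin_pow_prim k 0 = 0.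
Proof.
  induction k as [| | j IH] using nat_ind2.
  - reflexivity.
  - simpl. rewrite cos_0. ring.
  - rewrite sin_pow_prim_SS, IH, sin_0, pow_i by lia. unfold Rdiv. ring.
Qed.

Definition wallis_int (k : nat) : R := sin_pow_prim k (PI / 2).

Lemma wallis_int_SS (j : nat) :
  wallis_int (S (S j)) = INR (S j) / INR (S (S j)) * wallis_int j.
Proof. unfold wallis_int. rewrite sin_pow_prim_SS, cos_PI2. unfold Rdiv. ring. Qed.

Lemma wallis_int_S_le (k : nat) : wallis_int (S k) <= wallis_int k.
Proof.
  pose proof PI_RGT_0 as Hpi.
  assert (H : sin_pow_prim k 0 - sin_pow_prim (S k) 0
              <= sin_pow_prim k (PI / 2) - sin_pow_prim (S k) (PI / 2)).
  { apply (derive_nonneg_le (fun x => sin_pow_prim k x - sin_pow_prim (S k) x)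
      (fun x => sin x ^ k - sin x ^ S k)); [lra | |].
    - intros x _. apply (is_derive_minus (sin_pow_prim k) (sin_pow_prim (S k)));
        apply is_derive_sin_pow_prim.
    - intros x Hx.
      assert (0 <= sin x) by (apply sin_ge_0; lra).
      pose proof (SIN_bound x).
      assert (0 <= sin x ^ k) by (apply pow_le; lra).
      simpl pow. nra. }
  rewrite !sin_pow_prim_0 in H. unfold wallis_int. lra.
Qed.

Lemma wallis_int_even (n : nat) :
  wallis_int (2 * n) * (4 ^ n * INR (fact n) ^ 2) = PI / 2 * INR (fact (2 * n)).
Proof.
  induction n as [| n IH].
  - unfold wallis_int. simpl. field.
  - replace (2 * S n)%nat with (S (S (2 * n))) by lia.
    rewrite wallis_int_SS, !fact_simpl, !mult_INR, <- tech_pow_Rmult.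
    replace (PI / 2 * (INR (S (S (2 * n))) * (INR (S (2 * n)) * INR (fact (2 * n)))))
      with (INR (S (S (2 * n))) * INR (S (2 * n)) * (PI / 2 * INR (fact (2 * n)))) by ring.
    rewrite <- IH, !S_INR, mult_INR. simpl (INR 2).
    pose proof (pos_INR n). field. lra.
Qed.

Lemma wallis_int_odd (n : nat) :
  wallis_int (S (2 * n)) * INR (fact (S (2 * n))) = 4 ^ n * INR (fact n) ^ 2.
Proof.
  induction n as [| n IH].
  - unfold wallis_int. simpl. rewrite cos_PI2. ring.
  - replace (S (2 * S n)) with (S (S (S (2 * n)))) by lia.
    rewrite wallis_int_SS, (fact_simpl (S (S (2 * n)))), (fact_simpl (S (2 * n))),
      (fact_simpl n), !mult_INR, <- tech_pow_Rmult.
    replace (4 * 4 ^ n * (INR (S n) * INR (fact n)) ^ 2)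
      with (4 * INR (S n) ^ 2 * (4 ^ n * INR (fact n) ^ 2)) by ring.
    rewrite <- IH, !S_INR, mult_INR. simpl (INR 2).
    pose proof (pos_INR n). field. lra.
Qed.

Lemma wallis_ineq (n : nat) : (1 <= n)%nat ->
  PI * INR n * INR (fact (2 * n)) ^ 2 <= (4 ^ n * INR (fact n) ^ 2) ^ 2.
Proof.
  intros Hn. destruct n as [| m]; [lia |].
  pose proof (wallis_int_even (S m)) as Heven.
  pose proof (wallis_int_odd m) as Hodd.
  pose proof (wallis_int_S_le (S (2 * m))) as Hle.
  replace (S (S (2 * m))) with (2 * S m)%nat in Hle by lia.
  set (N := INR (S m)) in *. set (G := INR (fact (S (2 * m)))) in *.
  set (A := 4 ^ S m * INR (fact (S m)) ^ 2) in *.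
  set (B := INR (fact (2 * S m))) in *.
  assert (HA : A = 4 * N ^ 2 * (4 ^ m * INR (fact m) ^ 2)).
  { unfold A. rewrite fact_simpl, mult_INR, <- tech_pow_Rmult. fold N. ring. }
  assert (HB : B = 2 * N * G).
  { unfold B. replace (2 * S m)%nat with (S (S (2 * m))) by lia.
    rewrite fact_simpl, mult_INR. fold G. unfold N.
    rewrite !S_INR, mult_INR, S_INR, INR_1. ring. }
  assert (HN : 0 < N) by (apply lt_0_INR; lia).
  assert (HG : 0 < G) by apply INR_fact_lt_0.
  assert (HApos : 0 < A)
    by (apply Rmult_lt_0_compat; [apply pow_lt | apply pow_lt, INR_fact_lt_0]; lra).
  clearbody N G A B.
  transitivity (2 * N * B * A * wallis_int (2 * S m)).
  { right. replace (2 * N * B * A * wallis_int (2 * S m))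
      with (2 * N * B * (wallis_int (2 * S m) * A)) by ring.
    rewrite Heven. field. }
  transitivity (2 * N * B * A * wallis_int (S (2 * m))).
  { apply Rmult_le_compat_l; [| exact Hle].
    rewrite HB. left. repeat apply Rmult_lt_0_compat; lra. }
  right. rewrite HB, HA, <- Hodd. ring.
Qed.

(** * Stirling's lower bound *)

(** Tends to [2 * PI] by Stirling's formula. *)
Definition stirling_ratio (n : nat) : R :=
  (INR (fact n) * exp (INR n)) ^ 2 / INR n ^ (2 * n + 1).

Lemma stirling_ratio_pos (n : nat) : (1 <= n)%nat -> 0 < stirling_ratio n.
Proof.
  intros Hn. apply Rdiv_lt_0_compat; apply pow_lt.
  - apply Rmult_lt_0_compat; [apply INR_fact_lt_0 | apply exp_pos].
  - apply lt_0_INR. lia.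
Qed.

Lemma stirling_ratio_S (n : nat) : (1 <= n)%nat ->
  stirling_ratio (S n)
  = stirling_ratio n * exp (2 - (2 * INR n + 1) * ln (1 + / INR n)).
Proof.
  intros Hn. assert (HN : 0 < INR n) by (apply lt_0_INR; lia).
  replace (2 - (2 * INR n + 1) * ln (1 + / INR n))
    with (1 + 1 + - (INR (2 * n + 1) * ln (1 + / INR n)))
    by (rewrite plus_INR, mult_INR; simpl; ring).
  assert (Hy : 0 < 1 + / INR n) by (pose proof (Rinv_0_lt_compat _ HN); lra).
  rewrite !exp_plus, exp_Ropp, <- (pow_exp_ln _ _ Hy).
  replace (1 + / INR n) with ((INR n + 1) * / INR n) by (field; lra).
  rewrite Rpow_mult_distr, pow_inv.
  unfold stirling_ratio.
  replace (2 * S n + 1)%nat with (2 * n + 1 + 2)%nat by lia.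
  rewrite fact_simpl, mult_INR, !S_INR, exp_plus, pow_add.
  assert (0 < INR n + 1) by lra.
  pose proof (INR_fact_lt_0 n). pose proof (exp_pos 1). pose proof (exp_pos (INR n)).
  field. repeat split; try lra; apply pow_nonzero; lra.
Qed.

Lemma stirling_ratio_ge_1 (n : nat) : (1 <= n)%nat -> 1 <= stirling_ratio n.
Proof.
  assert (Hstep : forall k, 1 <= stirling_ratio (S k) * exp (- / INR (S k))).
  { induction k as [| k IH].
    - assert (Hs1 : stirling_ratio 1 = exp 1 ^ 2) by (unfold stirling_ratio; simpl; field).
      rewrite Hs1, INR_1, Rinv_1, exp_Ropp.
      pose proof (exp_ineq1_le 1). pose proof (exp_pos 1).
      replace (exp 1 ^ 2 * / exp 1) with (exp 1) by (field; lra). lra.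
    - rewrite stirling_ratio_S by lia. rewrite (S_INR (S k)).
      set (N := INR (S k)) in *.
      assert (HN : 1 <= N) by (apply (le_INR 1); lia).
      pose proof (mul_ln_1_plus_inv_le N HN).
      rewrite Rmult_assoc, <- exp_plus.
      apply (Rle_trans _ _ _ IH), Rmult_le_compat_l.
      + left. apply stirling_ratio_pos. lia.
      + apply exp_le_compat. lra. }
  intros Hn. destruct n as [| m]; [lia |].
  pose proof (Hstep m). pose proof (stirling_ratio_pos (S m) ltac:(lia)).
  assert (exp (- / INR (S m)) <= 1).
  { rewrite <- exp_0. apply exp_le_compat.
    pose proof (Rinv_0_lt_compat (INR (S m)) ltac:(apply lt_0_INR; lia)). lra. }
  nra.
Qed.

Lemma stirling_ratio_double (n : nat) : (1 <= n)%nat ->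
  2 * PI * stirling_ratio (2 * n) <= stirling_ratio n ^ 2.
Proof.
  intros Hn. pose proof (wallis_ineq n Hn) as Hwallis.
  unfold stirling_ratio. rewrite !pow_2n_1, pow_2n.
  replace (INR (2 * n)) with (2 * INR n) by (rewrite mult_INR; simpl; ring).
  replace (exp (2 * INR n)) with (exp (INR n) ^ 2)
    by (rewrite <- exp_INR_mul; f_equal; simpl; ring).
  rewrite (Rpow_mult_distr 2 (INR n) n).
  set (N := INR n) in *. set (P := N ^ n). set (T := 2 ^ n).
  replace (4 ^ n) with (T * T) in Hwallis
    by (unfold T; rewrite <- Rpow_mult_distr; f_equal; ring).
  set (E := exp N). set (F := INR (fact n)) in *. set (F2 := INR (fact (2 * n))) in *.
  assert (HN : 0 < N) by (apply lt_0_INR; lia).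
  assert (HP : 0 < P) by (apply pow_lt; lra).
  assert (HT : 0 < T) by (apply pow_lt; lra).
  assert (HE : 0 < E) by apply exp_pos.
  set (K := E ^ 4 / (T ^ 4 * P ^ 4 * N ^ 2)).
  assert (HK : 0 < K).
  { apply Rdiv_lt_0_compat; [apply pow_lt; lra |].
    apply Rmult_lt_0_compat; [apply Rmult_lt_0_compat |]; apply pow_lt; lra. }
  replace (2 * PI * ((F2 * E ^ 2) ^ 2 / (((T * P) ^ 2) ^ 2 * (2 * N))))
    with (K * (PI * N * F2 ^ 2)) by (unfold K; field; lra).
  replace (((F * E) ^ 2 / (P ^ 2 * N)) ^ 2) with (K * (T * T * F ^ 2) ^ 2)
    by (unfold K; field; lra).
  apply Rmult_le_compat_l; lra.
Qed.

Lemma stirling_ratio_ge_2PI (n : nat) : (1 <= n)%nat -> 2 * PI <= stirling_ratio n.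
Proof.
  intros Hn. pose proof PI_RGT_0 as Hpi.
  destruct (Rle_lt_dec (2 * PI) (stirling_ratio n)) as [Hge | Hlt]; [exact Hge | exfalso].
  set (rho := stirling_ratio n / (2 * PI)).
  assert (Hrho : 0 < rho < 1).
  { pose proof (stirling_ratio_pos n Hn). unfold rho. split.
    - apply Rdiv_lt_0_compat; lra.
    - apply (Rmult_lt_reg_r (2 * PI)); [lra |].
      unfold Rdiv. rewrite Rmult_assoc, Rinv_l; lra. }
  assert (Hiter : forall k, stirling_ratio (2 ^ k * n) <= 2 * PI * rho ^ (2 ^ k)).
  { induction k as [| k IH].
    - replace (2 ^ 0 * n)%nat with n by (simpl; lia).
      right. unfold rho. simpl. field. lra.
    - replace (2 ^ S k * n)%nat with (2 * (2 ^ k * n))%nat by (simpl; lia).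
      assert (Hkn : (1 <= 2 ^ k * n)%nat)
        by (pose proof (Nat.pow_gt_lin_r 2 k ltac:(lia)); nia).
      pose proof (stirling_ratio_double _ Hkn) as Hdouble.
      pose proof (stirling_ratio_ge_1 _ Hkn).
      assert (Hsq : stirling_ratio (2 ^ k * n) ^ 2 <= (2 * PI * rho ^ 2 ^ k) ^ 2)
        by (apply pow_incr; lra).
      replace ((2 * PI * rho ^ 2 ^ k) ^ 2) with (2 * PI * (2 * PI * rho ^ 2 ^ S k)) in Hsq
        by (rewrite Nat.pow_succ_r', pow_2n; ring).
      apply (Rmult_le_reg_l (2 * PI)); lra. }
  destruct (pow_lt_1_zero rho ltac:(rewrite Rabs_right; lra) (/ (2 * PI)))
    as [K HK]; [apply Rinv_0_lt_compat; lra |].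
  specialize (HK (2 ^ K)%nat ltac:(pose proof (Nat.pow_gt_lin_r 2 K ltac:(lia)); lia)).
  rewrite Rabs_right in HK by (left; apply pow_lt; lra).
  assert (HKn : (1 <= 2 ^ K * n)%nat)
    by (pose proof (Nat.pow_gt_lin_r 2 K ltac:(lia)); nia).
  pose proof (stirling_ratio_ge_1 _ HKn). pose proof (Hiter K).
  apply (Rmult_lt_compat_l (2 * PI)) in HK; [| lra].
  rewrite Rinv_r in HK; lra.
Qed.

Lemma poisson_pmf_mean_le (n : nat) : (1 <= n)%nat ->
  poisson_pmf n (INR n) <= 1 / sqrt (2 * PI * INR n).
Proof.
  intros Hn. set (N := INR n).
  assert (HN : 0 < N) by (apply lt_0_INR; lia).
  assert (Hid : poisson_pmf n N ^ 2 * (N * stirling_ratio n) = 1).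
  { unfold poisson_pmf, stirling_ratio. rewrite pow_2n_1, exp_Ropp. fold N.
    pose proof (INR_fact_lt_0 n). pose proof (exp_pos N).
    field. repeat split; try lra. apply pow_nonzero. lra. }
  pose proof (stirling_ratio_ge_2PI n Hn). pose proof PI_RGT_0.
  assert (Hsq : poisson_pmf n N ^ 2 <= / (2 * PI * N)).
  { apply (Rmult_le_reg_r (2 * PI * N)); [nra |].
    rewrite Rinv_l by nra.
    assert (0 <= poisson_pmf n N ^ 2) by apply pow2_ge_0. nra. }
  rewrite <- (sqrt_pow2 (poisson_pmf n N)) by (left; apply poisson_pmf_pos, HN).
  unfold Rdiv. rewrite Rmult_1_l, <- sqrt_inv.
  apply sqrt_le_1_alt, Hsq.
Qed.

(** * Nakamoto's probability *)

Lemma expsum_sum_f_R0 (m : nat) (x : R) :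
  expsum (S m) x = sum_f_R0 (fun k => x ^ k / INR (fact k)) m.
Proof.
  induction m as [| m IH]; [apply Rplus_0_l |].
  rewrite expsum_S, IH, tech5. reflexivity.
Qed.

Lemma poisson_pmf_mul (n : nat) (x r : R) :
  poisson_pmf n (x * r) = r ^ n * exp (x - x * r) * poisson_pmf n x.
Proof.
  unfold poisson_pmf. rewrite Rpow_mult_distr.
  unfold Rminus. rewrite exp_plus, !exp_Ropp.
  pose proof (exp_pos x). pose proof (exp_pos (x * r)).
  field. repeat split; [apply INR_fact_neq_0 | lra | lra].
Qed.

Lemma P_SN_eq (q : R) (z : nat) : (1 <= z)%nat ->
  let r := q / (1 - q) in
  P_SN q z = 1 - poisson_cdf z (INR z * r)
             + r ^ z * exp (INR z - INR z * r) * poisson_cdf z (INR z).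
Proof.
  intros Hz r. destruct z as [| m]; [lia |].
  unfold P_SN. cbv zeta. fold r.
  replace (INR (S m) * q / (1 - q)) with (INR (S m) * r) by (unfold r, Rdiv; ring).
  set (lam := INR (S m) * r). replace (S m - 1)%nat with m by lia.
  rewrite (sum_eq _ (fun k => lam ^ k / INR (fact k) * exp (- lam)
                              - INR (S m) ^ k / INR (fact k) * (exp (- lam) * r ^ S m))).
  - rewrite minus_sum, <- !scal_sum, <- !expsum_sum_f_R0.
    unfold poisson_cdf.
    replace (exp (INR (S m) - lam)) with (exp (INR (S m)) * exp (- lam))
      by (rewrite <- exp_plus; f_equal; ring).
    rewrite (exp_Ropp (INR (S m))). pose proof (exp_pos (INR (S m))). field. lra.
  - intros k Hk. unfold lam. rewrite Rpow_mult_distr.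
    replace (r ^ S m) with (r ^ k * r ^ (S m - k)) by (rewrite <- pow_add; f_equal; lia).
    field. apply INR_fact_neq_0.
Qed.

Theorem mainTheorem15 (q : R) (z : nat) :
  0 < q < 1 / 2 -> (1 <= z)%nat ->
  let p := 1 - q in
  let c := q / p - 1 - ln (q / p) in
  P_SN q z <
    1 / (1 - q / p) * (1 / sqrt (2 * PI * INR z)) * exp (- (c * INR z))
    + 1 / 2 * exp (- (c * INR z)).
Proof.
  intros Hq Hz. cbv zeta.
  set (r := q / (1 - q)). set (Z := INR z).
  assert (HZ : 1 <= Z) by (apply (le_INR 1), Hz).
  assert (Hr : 0 < r < 1).
  { unfold r. split; [apply Rdiv_lt_0_compat; lra |].
    apply (Rmult_lt_reg_r (1 - q)); [lra |].
    unfold Rdiv. rewrite Rmult_assoc, Rinv_l; lra. }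
  set (E := r ^ z * exp (Z - Z * r)).
  assert (HE : 0 < E) by (apply Rmult_lt_0_compat; [apply pow_lt | apply exp_pos]; lra).
  assert (Hrate : exp (- ((r - 1 - ln r) * Z)) = E).
  { unfold E. rewrite (pow_exp_ln r z) by lra. rewrite <- exp_plus. f_equal. fold Z. ring. }
  rewrite Hrate, P_SN_eq by exact Hz. fold r Z E.
  pose proof (poisson_tail_lt z (Z * r) ltac:(fold Z; split; nra)) as Htail.
  rewrite poisson_pmf_mul in Htail. fold Z E in Htail.
  replace (Z / (Z - Z * r)) with (1 / (1 - r)) in Htail by (field; split; nra).
  pose proof (poisson_pmf_mean_le z Hz) as Hstirling.
  pose proof (poisson_cdf_mean_le_half z) as Hmedian.
  fold Z in Hstirling, Hmedian.
  assert (Hfirst : E * poisson_pmf z Z * (1 / (1 - r))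
                   <= 1 / (1 - r) * (1 / sqrt (2 * PI * Z)) * E).
  { replace (E * poisson_pmf z Z * (1 / (1 - r))) with (1 / (1 - r) * poisson_pmf z Z * E)
      by ring.
    apply Rmult_le_compat_r; [lra |].
    apply Rmult_le_compat_l; [left; apply Rdiv_lt_0_compat |]; lra. }
  assert (Hsecond : E * poisson_cdf z Z <= 1 / 2 * E) by nra.
  lra.
Qed.
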